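(* Let $\mathcal A$ be a causal linear time-invariant algorithm with state-space realization $(A,B,C,D)$ whose oracles are (sub)gradients, and let $i\ne j$ be oracle indices with $D_{ii}\ne0$ and $D_{jj}\ne0$. Then $\mathcal C_i\mathcal C_j\mathcal A=\mathcal C_j\mathcal C_i\mathcal A=\mathcal C_{\{i,j\}}\mathcal A$.
   Context: A linear time-invariant algorithm generates $x^{k+1}=Ax^k+Bu^k$, $y^k=Cx^k+Du^k$, $u^k=\phi(y^k)$, with oracles $\partial f_1,\dots,\partial f_n$ (subgradients of convex functions) called in the order $1,\dots,n$ each iteration; causality means each oracle call depends only on previously computed quantities, so $D$ (indexed blockwise by oracles in call order) is lower triangular. For a set $\kappa$ of oracle indices, $\mathcal C_\kappa\mathcal A$ is the algorithm obtained by rewriting $\mathcal A$ to call $\partial f_i^\star=(\partial f_i)^{-1}$ ($f^\star$ the Fenchel conjugate) instead of $\partial f_i$ for $i\in\kappa$; $\mathcal C_i=\mathcal C_{\{i\}}$. Algorithms are compared via their transfer functions $C(zI-A)^{-1}B+D$. *)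

From HB Require Import structures.
From mathcomp Require Import all_boot all_order all_algebra.
From mathcomp Require Import all_reals.
Set Implicit Arguments. Unset Strict Implicit. Unset Printing Implicit Defensive.
Import Order.TTheory GRing.Theory Num.Theory.
Local Open Scope ring_scope.

(* A linear time-invariant algorithm with n (scalar-coefficient) oracles,
   called in the order 0, ..., n-1, and state dimension s:
     x^{k+1} = A x^k + B u^k,   y^k = C x^k + D u^k,   u^k_i in \partial f_i (y^k_i). *)
Record lti (R : Type) (n s : nat) := LTI {
  ltiA : 'M[R]_s;
  ltiB : 'M[R]_(s, n);
  ltiC : 'M[R]_(n, s);
  ltiD : 'M[R]_n }.

(* Causality: D is lower triangular (oracle i only uses u_j for j < i, and
   possibly u_i itself through an implicit/proximal step). *)
Definition causal (R : ringType) n s (S : lti R n s) : Prop :=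
  forall a b : 'I_n, (a < b)%N -> ltiD S a b = 0.

Definition selmx (R : ringType) n (kappa : {set 'I_n}) : 'M[R]_n :=
  \matrix_(a, b) ((a == b) && (a \in kappa))%:R.

(* C_kappa : rewrite the algorithm so that it calls \partial f_i^* = (\partial f_i)^{-1}
   instead of \partial f_i for i in kappa.  For i in kappa the roles of y_i and u_i
   are swapped: the new oracle input is y'_i = u_i and its output is u'_i = y_i
   (u_i in \partial f_i(y_i) <-> y_i in \partial f_i^*(u_i)).  Solving
   y = C x + D u for u_kappa (which requires D_{kappa kappa} invertible) gives the
   realization below, with P = selection of kappa, Q = I - P,
   F = (P D P + Q)^{-1} P, G = Q + F - F D Q:
     u  = G u' - F C x,
     A' = A - B F C,  B' = B G,  C' = (Q - (Q D + P) F) C,  D' = (Q D + P) G. *)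
Definition conj_alg (R : fieldType) n s (kappa : {set 'I_n}) (S : lti R n s)
  : lti R n s :=
  let P := selmx R kappa in
  let Q := 1%:M - P in
  let D := ltiD S in
  let F := invmx (P *m D *m P + Q) *m P in
  let G := Q + F - F *m D *m Q in
  LTI (ltiA S - ltiB S *m F *m ltiC S)
      (ltiB S *m G)
      ((Q - (Q *m D + P) *m F) *m ltiC S)
      ((Q *m D + P) *m G).

Definition ratfun (R : fieldType) := {fraction {poly R}}.
Definition rconst (R : fieldType) (a : R) : ratfun R := FracField.tofrac (a%:P).
Definition zvar (R : fieldType) : ratfun R := FracField.tofrac ('X : {poly R}).

Definition transfer (R : fieldType) n s (S : lti R n s) : 'M[ratfun R]_n :=
  map_mx (@rconst R) (ltiC S)
    *m invmx ((zvar R)%:M - map_mx (@rconst R) (ltiA S))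
    *m map_mx (@rconst R) (ltiB S)
  + map_mx (@rconst R) (ltiD S).

From HB Require Import structures.
From mathcomp Require Import all_boot all_order all_algebra.
From mathcomp Require Import all_reals.
Import Order.TTheory GRing.Theory Num.Theory.
Local Open Scope ring_scope.

(* Let P select the coordinates in kappa and N = (1 - P) + P D.  Swapping u_kappa
   and y_kappa turns the input into u' = N u + P C x, so when N is invertible
   C_kappa A is the unique realization satisfying four linear equations in N.
   These compose: for disjoint kappa and lambda, N_{kappa+lambda}(D) =
   N_kappa(D') N_lambda(D) with D' the feedthrough of C_lambda A, hence
   C_kappa C_lambda A and C_{kappa+lambda} A coincide as realizations, not only
   as transfer functions.  Causality makes N lower triangular with diagonal
   D_aa on kappa and 1 elsewhere, so D_ii, D_jj <> 0 make every N involved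
   invertible. *)

Section SelectionMatrices.
Context {R : nzRingType} {n : nat}.
Implicit Types (k l : {set 'I_n}).

Lemma selmx_mulE m k (M : 'M[R]_(n, m)) a b :
  (selmx R k *m M) a b = (a \in k)%:R * M a b.
Proof.
rewrite mxE (bigD1 a) //= big1 ?addr0 => [|c /negbTE c_a]; first by rewrite mxE eqxx.
by rewrite mxE eq_sym c_a mul0r.
Qed.

Lemma selmx_mul k l : selmx R k *m selmx R l = selmx R (k :&: l).
Proof.
apply/matrixP=> a b; rewrite selmx_mulE !mxE inE.
by case: (a \in k); case: (a == b); rewrite ?mul1r ?mul0r ?andbF.
Qed.

Lemma selmx_set0 : selmx R set0 = 0 :> 'M_n.
Proof. by apply/matrixP=> a b; rewrite !mxE inE andbF. Qed.

Lemma selmx_idem k : selmx R k *m selmx R k = selmx R k.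
Proof. by rewrite selmx_mul setIid. Qed.

Lemma selmx_disjoint_mul {k l} : [disjoint k & l] -> selmx R k *m selmx R l = 0.
Proof. by move=> /disjoint_setI0 kl0; rewrite selmx_mul kl0 selmx_set0. Qed.

Lemma selmx_disjointU {k l} :
  [disjoint k & l] -> selmx R (k :|: l) = selmx R k + selmx R l.
Proof.
move=> /disjoint_setI0/setP kl0; apply/matrixP=> a b.
have := kl0 a; rewrite !mxE !inE.
by case: (a \in k); case: (a \in l); case: (a == b); rewrite //= ?addr0 ?add0r.
Qed.

End SelectionMatrices.

Definition conj_inmx {R : nzRingType} {n} (P D : 'M[R]_n) : 'M[R]_n :=
  (1%:M - P) + P *m D.

Section Idempotent.
Context {R : nzRingType} {n : nat} {P : 'M[R]_n}.
Hypothesis PP : P *m P = P.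

Lemma complmx_idem_mul : (1%:M - P) *m P = 0.
Proof. by rewrite mulmxBl mul1mx PP subrr. Qed.

Lemma idem_mul_complmx : P *m (1%:M - P) = 0.
Proof. by rewrite mulmxBr mulmx1 PP subrr. Qed.

Lemma complmx_idem : (1%:M - P) *m (1%:M - P) = 1%:M - P.
Proof. by rewrite mulmxBl mul1mx idem_mul_complmx subr0. Qed.

Lemma conj_inmx_factor (D : 'M[R]_n) :
  conj_inmx P D = (1%:M + P *m D *m (1%:M - P)) *m (P *m D *m P + (1%:M - P)).
Proof.
rewrite mulmxDl mul1mx mulmxDr -!mulmxA (mulmxA _ P) complmx_idem_mul mul0mx.
rewrite !mulmx0 add0r complmx_idem /conj_inmx [RHS]addrAC -!mulmxDr.
by rewrite [P + _]addrC subrK mulmx1 addrC.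
Qed.

End Idempotent.

(* With u' = (1 - P) u + P y = conj_inmx P D u + P C x the new input and
   y' = (1 - P) y + P u the new output, T fed with u' has the state update and
   output of S fed with u. *)
Definition conj_spec {R : nzRingType} {n s} (P : 'M[R]_n) (S T : lti R n s) : Prop :=
  let N := conj_inmx P (ltiD S) in
  [/\ ltiB T *m N = ltiB S,
      ltiD T *m N = (1%:M - P) *m ltiD S + P,
      ltiA T + ltiB T *m P *m ltiC S = ltiA S &
      ltiC T + ltiD T *m P *m ltiC S = (1%:M - P) *m ltiC S].

Lemma conj_algP {R : fieldType} {n s} {k : {set 'I_n}} {S : lti R n s} :
  conj_inmx (selmx R k) (ltiD S) \in unitmx -> conj_spec (selmx R k) S (conj_alg k S).
Proof.
move=> Nunit; rewrite /conj_spec /conj_alg /=.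
set P := selmx R k; set Q := 1%:M - P; set D := ltiD S.
have PP : P *m P = P := selmx_idem k.
have QP : Q *m P = 0 := complmx_idem_mul PP.
have PQ : P *m Q = 0 := idem_mul_complmx PP.
have QQ : Q *m Q = Q := complmx_idem PP.
set W := P *m D *m P + Q.
have Wunit : W \in unitmx.
  by move: Nunit; rewrite conj_inmx_factor // unitmx_mul => /andP[].
set F := invmx W *m P; set G := Q + F - F *m D *m Q.
have FQ : F *m Q = 0 by rewrite -mulmxA PQ mulmx0.
have FP : F *m P = F by rewrite -mulmxA PP.
have FDP : F *m D *m P = P.
  have -> : F *m D *m P = invmx W *m (W - Q) by rewrite /W addrK !mulmxA.
  have WQ : W *m Q = Q by rewrite /W mulmxDl -mulmxA PQ mulmx0 add0r QQ.
  by rewrite mulmxBr mulVmx // -{1}WQ mulKmx // opprB addrC subrK.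
have GP : G *m P = F.
  by rewrite /G mulmxBl mulmxDl QP FP -(mulmxA (F *m D)) QP mulmx0 add0r subr0.
have GQ : G *m Q = Q - F *m D *m Q.
  by rewrite /G mulmxBl mulmxDl QQ FQ addr0 -(mulmxA _ Q Q) QQ.
have GN : G *m conj_inmx P D = 1%:M.
  rewrite /conj_inmx mulmxDr GQ mulmxA GP addrAC -addrA -{1}[F *m D]mulmx1.
  by rewrite -mulmxBr subKr FDP subrK.
split.
- by rewrite -mulmxA GN mulmx1.
- by rewrite -mulmxA GN mulmx1.
- by rewrite -(mulmxA _ G P) GP subrK.
- by rewrite -(mulmxA _ G P) GP mulmxBl subrK.
Qed.

Lemma conj_spec_uniq {R : comUnitRingType} {n s} {P : 'M[R]_n} {S T1 T2 : lti R n s} :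
  conj_inmx P (ltiD S) \in unitmx -> conj_spec P S T1 -> conj_spec P S T2 -> T1 = T2.
Proof.
move=> Nunit; case: T1 => A1 B1 C1 D1; case: T2 => A2 B2 C2 D2 /=.
move=> [B1E D1E A1E C1E] [B2E D2E A2E C2E].
have mulN_inj := can_inj (mulmxK Nunit).
have eB : B1 = B2 by apply: mulN_inj; rewrite /= B1E B2E.
have eD : D1 = D2 by apply: mulN_inj; rewrite /= D1E D2E.
have eA : A1 = A2 by apply: (addIr (B1 *m P *m ltiC S)); rewrite A1E eB A2E.
have eC : C1 = C2 by apply: (addIr (D1 *m P *m ltiC S)); rewrite C1E eD C2E.
by rewrite eA eB eC eD.
Qed.

Section ConjSpecComposition.
Context {R : nzRingType} {n s : nat} {Pk Pl : 'M[R]_n}.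
Hypothesis PkPl : Pk *m Pl = 0.

Let QkPl : (1%:M - Pk) *m Pl = Pl.
Proof. by rewrite mulmxBl mul1mx PkPl subr0. Qed.

Let PkQl : Pk *m (1%:M - Pl) = Pk.
Proof. by rewrite mulmxBr mulmx1 PkPl subr0. Qed.

Let QkQl : (1%:M - Pk) *m (1%:M - Pl) = 1%:M - (Pk + Pl).
Proof. by rewrite mulmxBl mul1mx PkQl addrAC opprD addrA. Qed.

Context {S S1 S2 : lti R n s}.
Hypotheses (spec1 : conj_spec Pl S S1) (spec2 : conj_spec Pk S1 S2).

Lemma conj_inmx_comp :
  conj_inmx (Pk + Pl) (ltiD S) = conj_inmx Pk (ltiD S1) *m conj_inmx Pl (ltiD S).
Proof.
have [_ D1N _ _] := spec1.
rewrite [RHS]mulmxDl -mulmxA D1N /conj_inmx mulmxDr mulmxA QkQl mulmxDr QkPl.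
by rewrite mulmxA PkQl PkPl addr0 mulmxDl addrA (addrAC _ (Pk *m _)).
Qed.

Let input_split :
  conj_inmx Pk (ltiD S1) *m Pl *m ltiC S + Pk *m ltiC S1 = (Pk + Pl) *m ltiC S.
Proof.
have [_ _ _ C1E] := spec1.
have -> : ltiC S1 = (1%:M - Pl) *m ltiC S - ltiD S1 *m Pl *m ltiC S.
  by rewrite -C1E addrK.
rewrite /conj_inmx mulmxDl QkPl mulmxBr mulmxA PkQl !mulmxA.
by rewrite mulmxDl addrC addrA addrAC subrK mulmxDl.
Qed.

Lemma conj_spec_comp : conj_spec (Pk + Pl) S S2.
Proof.
have [B1E D1E A1E C1E] := spec1; have [B2E D2E A2E C2E] := spec2.
split.
- by rewrite conj_inmx_comp mulmxA B2E B1E.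
- rewrite conj_inmx_comp mulmxA D2E mulmxDl -mulmxA D1E mulmxDr mulmxA QkQl QkPl.
  by rewrite /conj_inmx mulmxDr PkQl mulmxA PkPl mul0mx addr0 -addrA (addrC Pl).
- rewrite -mulmxA -input_split mulmxDr addrA addrAC !mulmxA A2E B2E.
  exact: A1E.
- rewrite -mulmxA -input_split mulmxDr addrA addrAC !mulmxA C2E D2E.
  rewrite (mulmxDl _ Pk Pl) PkPl addr0 -!mulmxA -mulmxDr !mulmxA C1E.
  by rewrite mulmxA QkQl.
Qed.

End ConjSpecComposition.

Lemma conj_inmx_selmxE (R : nzRingType) n (k : {set 'I_n}) (D : 'M[R]_n) a b :
  conj_inmx (selmx R k) D a b = if a \in k then D a b else (a == b)%:R.
Proof.
rewrite /conj_inmx [LHS]mxE selmx_mulE !mxE.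
by case: (a \in k); case: (a == b); rewrite ?mul1r ?mul0r ?subrr ?add0r ?addr0 ?subr0.
Qed.

Lemma conj_inmx_selmx_trig (R : nzRingType) n (k : {set 'I_n}) (D : 'M[R]_n) :
  is_trig_mx D -> is_trig_mx (conj_inmx (selmx R k) D).
Proof.
move=> /is_trig_mxP Dtrig; apply/is_trig_mxP => a b ab.
have /negbTE a_neq_b : a != b by apply: contraTneq ab => ->; rewrite ltnn.
by rewrite conj_inmx_selmxE Dtrig // a_neq_b if_same.
Qed.

Lemma conj_inmx_selmx_unit (R : fieldType) n (k : {set 'I_n}) (D : 'M[R]_n) :
  is_trig_mx D -> {in k, forall a, D a a != 0} -> conj_inmx (selmx R k) D \in unitmx.
Proof.
move=> Dtrig Dk; rewrite unitmxE det_trig ?conj_inmx_selmx_trig // unitfE.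
apply/prodf_neq0 => a _; rewrite conj_inmx_selmxE eqxx.
by case: ifP => [/Dk|_]; rewrite ?oner_eq0.
Qed.

Lemma conj_alg_comp (R : fieldType) n s (k l : {set 'I_n}) (S : lti R n s) :
  [disjoint k & l] ->
  conj_inmx (selmx R l) (ltiD S) \in unitmx ->
  conj_inmx (selmx R (k :|: l)) (ltiD S) \in unitmx ->
  conj_alg k (conj_alg l S) = conj_alg (k :|: l) S.
Proof.
move=> kl Nl Nkl; have PkPl := selmx_disjoint_mul (R := R) kl; have specl := conj_algP Nl.
have Nk : conj_inmx (selmx R k) (ltiD (conj_alg l S)) \in unitmx.
  move: Nkl; rewrite selmx_disjointU // (conj_inmx_comp PkPl specl).
  by rewrite unitmx_mul => /andP[].
apply: (conj_spec_uniq Nkl); last exact: conj_algP.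
by rewrite selmx_disjointU //; exact: (conj_spec_comp PkPl specl (conj_algP Nk)).
Qed.

Theorem proposition8p4 (R : realType) (n s : nat) (S : lti R n s) (i j : 'I_n) :
  causal S -> i != j -> ltiD S i i != 0 -> ltiD S j j != 0 ->
  transfer (conj_alg [set i] (conj_alg [set j] S))
    = transfer (conj_alg [set i; j] S) /\
  transfer (conj_alg [set j] (conj_alg [set i] S))
    = transfer (conj_alg [set i; j] S).
Proof.
move=> causalS ij Dii Djj.
have Dtrig : is_trig_mx (ltiD S) by apply/is_trig_mxP.
have Nunit (k : {set 'I_n}) :
    k \subset [set i; j] -> conj_inmx (selmx R k) (ltiD S) \in unitmx.
  move=> /subsetP kij; apply: conj_inmx_selmx_unit => // a /kij.
  by rewrite !inE => /orP[] /eqP->.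
have comp (a b : 'I_n) : a != b -> [set a; b] \subset [set i; j] ->
    conj_alg [set a] (conj_alg [set b] S) = conj_alg [set a; b] S.
  move=> ab abij; apply: conj_alg_comp.
  - by rewrite disjoints1 inE.
  - by apply: Nunit; apply: subset_trans abij; apply: subsetUr.
  - exact: Nunit.
have ji : j != i by rewrite eq_sym.
split; first by rewrite comp.
by rewrite comp 1?setUC.
Qed.
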